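(* Let $d,n,p\ge1$, $a_1,\dots,a_n\in\mathbb{R}^d$, $\lambda_1,\dots,\lambda_n\ge0$, $\tau=r/s$ with $r\ge s\ge1$ integers, $\gcd(r,s)=1$, and let $\mathbf{K}=\{x\in\mathbb{R}^d:g_1(x)\ge0,\dots,g_m(x)\ge0\}$ be a compact basic closed semialgebraic set satisfying the Archimedean property. For each $i$ let $UB_i\ge \max\{\|x-a_i\|_\tau: x\in\mathbf{K}\}$. Then: (i) If $(x_1,\dots,x_p)\in\mathbf{K}^p$ is feasible for (LOCOMF), there exist $(z,u,v,\zeta,w,t,\theta)$ such that $(x,z,u,v,\zeta,w,t,\theta)$ is feasible for (MFOMP$_\lambda$) and $\sum_{\ell}\lambda_\ell\theta_\ell=\sum_i\lambda_i\tilde f_{(i)}(x)$. (ii) Conversely, if $(x,z,u,v,\zeta,w,t,\theta)$ is feasible for (MFOMP$_\lambda$), then $x=(x_1,\dots,x_p)$ is feasible for (LOCOMF). (iii) $\rho_\lambda=\hat\rho_\lambda$. (iv) If $\mathbf{K}$ satisfies Slater's condition (it has a point where all $g_k$ are strictly positive), then the continuous relaxation of (MFOMP$_\lambda$), obtained by replacing $w_{i\ell}\in\{0,1\}$, $z_{ij}\in\{0,1\}$ with $w_{i\ell},z_{ij}\in[0,1]$, has a feasible point at which all inequality constraints hold strictly (Slater's condition).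
   Context: $\|z\|_\tau=(\sum_{k=1}^d|z_k|^\tau)^{1/\tau}$. For $x=(x_1,\dots,x_p)\in(\mathbb{R}^d)^p$ let $\tilde f_i(x)=\min_{j=1,\dots,p}\|x_j-a_i\|_\tau$, and let $\tilde f_{(1)}(x)\ge\dots\ge\tilde f_{(n)}(x)$ be the nonincreasing rearrangement of $(\tilde f_1(x),\dots,\tilde f_n(x))$. Problem (LOCOMF): $\rho_\lambda=\min\{\sum_{i=1}^n\lambda_i\tilde f_{(i)}(x): x_j\in\mathbf{K},\ j=1,\dots,p\}$. Problem (MFOMP$_\lambda$): $\hat\rho_\lambda=\min\sum_{\ell=1}^n\lambda_\ell\theta_\ell$ over $x_j\in\mathbf{K}$ ($x_j=(x_{j1},\dots,x_{jd})$), nonnegative reals $\theta_\ell,t_i,v_{ijk},\zeta_{ijk},u_{ij}$ and binaries $w_{i\ell},z_{ij}\in\{0,1\}$ ($i,\ell=1,\dots,n$; $j=1,\dots,p$; $k=1,\dots,d$), subject to: $t_i\le\theta_\ell+UB_i(1-w_{i\ell})$ for all $i,\ell$; $\theta_\ell\ge\theta_{\ell+1}$ for $\ell=1,\dots,n-1$; $u_{ij}\le t_i+UB_i(1-z_{ij})$ for all $i,j$; $v_{ijk}-x_{jk}+a_{ik}\ge0$ and $v_{ijk}+x_{jk}-a_{ik}\ge0$ for all $i,j,k$; $v_{ijk}^r\le\zeta_{ijk}^su_{ij}^{r-s}$ for all $i,j,k$; $\sum_{k=1}^d\zeta_{ijk}\le u_{ij}$ for all $i,j$; $\sum_{j=1}^pz_{ij}=1$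 for all $i$; $\sum_{i=1}^nw_{i\ell}=1$ for all $\ell$; $\sum_{\ell=1}^nw_{i\ell}=1$ for all $i$. Convention $0^0=1$ when $r=s$. A set $\mathbf{K}=\{g_k\ge0\}$ satisfies the Archimedean property if for some $M>0$, $M-\sum_i x_i^2=\sigma_0+\sum_k\sigma_kg_k$ with $\sigma_0,\sigma_k$ sums of squares of polynomials. *)

From Stdlib Require Import Reals List Arith.
Import ListNotations.
Open Scope R_scope.

Fixpoint sumR (n : nat) (f : nat -> R) : R :=
  match n with O => 0 | S m => sumR m f + f m end.

(* minR m f = min (f 0, ..., f m) *)
Fixpoint minR (m : nat) (f : nat -> R) : R :=
  match m with O => f O | S m' => Rmin (minR m' f) (f (S m')) end.

(* (Stdlib's Rpower 0 y = 1, so we fix the value at nonpositive bases.) *)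
Definition rpow (x y : R) : R := if Rle_dec x 0 then 0 else Rpower x y.

(* ---------- the tau-norm, tau = r/s, on R^d (vectors are nat -> R,
   coordinates 0..d-1) ---------- *)
Definition tau (r s : nat) : R := INR r / INR s.

Definition tau_norm (d r s : nat) (z : nat -> R) : R :=
  rpow (sumR d (fun k => rpow (Rabs (z k)) (tau r s))) (/ tau r s).

Definition ftilde (d p r s : nat) (a : nat -> nat -> R)
  (x : nat -> nat -> R) (i : nat) : R :=
  minR (p - 1) (fun j => tau_norm d r s (fun k => x j k - a i k)).

Fixpoint insert_desc (y : R) (l : list R) : list R :=
  match l with
  | [] => [y]
  | h :: t => if Rle_dec y h then h :: insert_desc y t else y :: l
  end.

Definition sort_desc (l : list R) : list R := fold_right insert_desc [] l.

Definition loc_obj (d n p r s : nat) (a : nat -> nat -> R) (lam : nat -> R)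
  (x : nat -> nat -> R) : R :=
  let sorted := sort_desc (map (ftilde d p r s a x) (seq 0 n)) in
  sumR n (fun i => lam i * nth i sorted 0).

Inductive mpoly : Type :=
| PVar : nat -> mpoly
| PConst : R -> mpoly
| PAdd : mpoly -> mpoly -> mpoly
| PMul : mpoly -> mpoly -> mpoly.

Fixpoint peval (q : mpoly) (x : nat -> R) : R :=
  match q with
  | PVar k => x k
  | PConst c => c
  | PAdd q1 q2 => peval q1 x + peval q2 x
  | PMul q1 q2 => peval q1 x * peval q2 x
  end.

Fixpoint poly_in (d : nat) (q : mpoly) : Prop :=
  match q with
  | PVar k => (k < d)%nat
  | PConst _ => True
  | PAdd q1 q2 => poly_in d q1 /\ poly_in d q2
  | PMul q1 q2 => poly_in d q1 /\ poly_in d q2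
  end.

(* a sum of squares of polynomials, given by the list of the squared ones *)
Definition sos_eval (l : list mpoly) (x : nat -> R) : R :=
  fold_right (fun q acc => peval q x ^ 2 + acc) 0 l.

Definition inK (m : nat) (g : nat -> mpoly) (x : nat -> R) : Prop :=
  forall k, (k < m)%nat -> 0 <= peval (g k) x.

(* Archimedean property: M - sum x_i^2 = sigma_0 + sum_k sigma_k g_k
   with sigma's SOS (identity of polynomials in d variables; since R is
   infinite this is the identity of the polynomial functions on R^d). *)
Definition archimedean (d m : nat) (g : nat -> mpoly) : Prop :=
  exists (M : R) (sig0 : list mpoly) (sig : nat -> list mpoly),
    0 < M /\
    Forall (poly_in d) sig0 /\
    (forall k, (k < m)%nat -> Forall (poly_in d) (sig k)) /\
    forall x : nat -> R,
      M - sumR d (fun i => x i ^ 2)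
      = sos_eval sig0 x + sumR m (fun k => sos_eval (sig k) x * peval (g k) x).

Definition slater_K (m : nat) (g : nat -> mpoly) : Prop :=
  exists x : nat -> R, forall k, (k < m)%nat -> 0 < peval (g k) x.

Definition loc_feasible (p m : nat) (g : nat -> mpoly) (x : nat -> nat -> R) : Prop :=
  forall j, (j < p)%nat -> inK m g (x j).

(* ---------- (MFOMP_lambda) ----------
   x j k = x_{jk}, theta l, t i, v i j k, zeta i j k, u i j, w i l, z i j;
   indices 0-based: i,l < n, j < p, k < d.
   [bin = true]: w, z binary;  [bin = false]: continuous relaxation w, z in [0,1]. *)
Definition mf_feasible (d n p r s m : nat) (g : nat -> mpoly)
  (a : nat -> nat -> R) (UB : nat -> R) (bin : bool)
  (x : nat -> nat -> R) (z u : nat -> nat -> R) (v zeta : nat -> nat -> nat -> R)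
  (w : nat -> nat -> R) (t theta : nat -> R) : Prop :=
  let dom := fun y : R => if bin then (y = 0 \/ y = 1) else (0 <= y <= 1) in
  (forall j, (j < p)%nat -> inK m g (x j)) /\
  (forall l, (l < n)%nat -> 0 <= theta l) /\
  (forall i, (i < n)%nat -> 0 <= t i) /\
  (forall i j k, (i < n)%nat -> (j < p)%nat -> (k < d)%nat ->
       0 <= v i j k /\ 0 <= zeta i j k) /\
  (forall i j, (i < n)%nat -> (j < p)%nat -> 0 <= u i j) /\
  (forall i l, (i < n)%nat -> (l < n)%nat -> dom (w i l)) /\
  (forall i j, (i < n)%nat -> (j < p)%nat -> dom (z i j)) /\
  (forall i l, (i < n)%nat -> (l < n)%nat ->
       t i <= theta l + UB i * (1 - w i l)) /\
  (forall l, (l + 1 < n)%nat -> theta l >= theta (l + 1)%nat) /\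
  (forall i j, (i < n)%nat -> (j < p)%nat -> u i j <= t i + UB i * (1 - z i j)) /\
  (forall i j k, (i < n)%nat -> (j < p)%nat -> (k < d)%nat ->
       v i j k - x j k + a i k >= 0 /\ v i j k + x j k - a i k >= 0) /\
  (forall i j k, (i < n)%nat -> (j < p)%nat -> (k < d)%nat ->
       v i j k ^ r <= zeta i j k ^ s * u i j ^ (r - s)) /\
  (forall i j, (i < n)%nat -> (j < p)%nat -> sumR d (fun k => zeta i j k) <= u i j) /\
  (forall i, (i < n)%nat -> sumR p (fun j => z i j) = 1) /\
  (forall l, (l < n)%nat -> sumR n (fun i => w i l) = 1) /\
  (forall i, (i < n)%nat -> sumR n (fun l => w i l) = 1).

(* Strict feasibility (Slater point) for the continuous relaxation: every
   inequality constraint of the relaxed problem holds strictly (including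
   g_k(x_j) > 0, positivity of the nonnegative variables and w, z > 0);
   only the upper bounds w, z <= 1 are kept non-strict, since they cannot be
   strict together with the equality constraints when p = 1 or n = 1. *)
Definition mf_relaxed_strict (d n p r s m : nat) (g : nat -> mpoly)
  (a : nat -> nat -> R) (UB : nat -> R)
  (x : nat -> nat -> R) (z u : nat -> nat -> R) (v zeta : nat -> nat -> nat -> R)
  (w : nat -> nat -> R) (t theta : nat -> R) : Prop :=
  (forall j k, (j < p)%nat -> (k < m)%nat -> 0 < peval (g k) (x j)) /\
  (forall l, (l < n)%nat -> 0 < theta l) /\
  (forall i, (i < n)%nat -> 0 < t i) /\
  (forall i j k, (i < n)%nat -> (j < p)%nat -> (k < d)%nat ->
       0 < v i j k /\ 0 < zeta i j k) /\
  (forall i j, (i < n)%nat -> (j < p)%nat -> 0 < u i j) /\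
  (forall i l, (i < n)%nat -> (l < n)%nat -> 0 < w i l <= 1) /\
  (forall i j, (i < n)%nat -> (j < p)%nat -> 0 < z i j <= 1) /\
  (forall i l, (i < n)%nat -> (l < n)%nat ->
       t i < theta l + UB i * (1 - w i l)) /\
  (forall l, (l + 1 < n)%nat -> theta l > theta (l + 1)%nat) /\
  (forall i j, (i < n)%nat -> (j < p)%nat -> u i j < t i + UB i * (1 - z i j)) /\
  (forall i j k, (i < n)%nat -> (j < p)%nat -> (k < d)%nat ->
       v i j k - x j k + a i k > 0 /\ v i j k + x j k - a i k > 0) /\
  (forall i j k, (i < n)%nat -> (j < p)%nat -> (k < d)%nat ->
       v i j k ^ r < zeta i j k ^ s * u i j ^ (r - s)) /\
  (forall i j, (i < n)%nat -> (j < p)%nat -> sumR d (fun k => zeta i j k) < u i j) /\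
  (forall i, (i < n)%nat -> sumR p (fun j => z i j) = 1) /\
  (forall l, (l < n)%nat -> sumR n (fun i => w i l) = 1) /\
  (forall i, (i < n)%nat -> sumR n (fun l => w i l) = 1).

Definition mf_obj (n : nat) (lam theta : nat -> R) : R :=
  sumR n (fun l => lam l * theta l).

(* Two facts carry the argument.
   - Conic certificates for the tau-norm: if |c_k| <= v_k,
     v_k^r <= zeta_k^s u^(r-s) and sum_k zeta_k <= u then ||c||_tau <= u
     ([tau_norm_le_certificate], a Hoelder-type bound), and u = ||c||_tau
     is attained by an explicit zeta ([exact_certificate]).
   - Ordering by permutation matrices: the l-th largest value of f is
     monotone, Lipschitz and permutation invariant ([kth_largest_mono],
     [kth_largest_perm]) and equals theta_l when theta is nonincreasing;
     a binary doubly stochastic w is the matrix of a permutation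
     ([binary_assignment_perm]).
   Part (i) lifts x with u_ij = ||x_j - a_i||_tau, z a closest-facility
   assignment and w a sorting permutation ([mf_lift]); part (ii) is a
   projection; combining both facts gives loc_obj <= mf_obj at every feasible
   point ([loc_obj_le_mf_obj]), so (iii) follows once the continuous objective
   of (LOCOMF) attains its minimum on the compact set K^p, proved by a
   Bolzano-Weierstrass argument on a minimising sequence
   ([loc_obj_attains_min]). *)

From Stdlib Require Import Reals List Arith Lra Lia Permutation FinFun ClassicalEpsilon.
Import ListNotations.
Open Scope R_scope.

Lemma sumR_ext n f g : (forall i, (i < n)%nat -> f i = g i) -> sumR n f = sumR n g.
Proof.
  induction n as [|n IH]; simpl; intros H; auto.
  rewrite IH by (intros; apply H; lia). rewrite H by lia. reflexivity.
Qed.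

Lemma sumR_le n f g : (forall i, (i < n)%nat -> f i <= g i) -> sumR n f <= sumR n g.
Proof.
  induction n as [|n IH]; simpl; intros H; [lra|].
  assert (f n <= g n) by (apply H; lia).
  assert (sumR n f <= sumR n g) by (apply IH; intros; apply H; lia). lra.
Qed.

Lemma sumR_const n c : sumR n (fun _ => c) = INR n * c.
Proof. induction n as [|n IH]; simpl sumR; [simpl; lra|]. rewrite IH, S_INR. lra. Qed.

Lemma sumR_scal n c f : sumR n (fun i => c * f i) = c * sumR n f.
Proof. induction n as [|n IH]; simpl; [lra|]. rewrite IH. lra. Qed.

Lemma sumR_nonneg n f : (forall i, (i < n)%nat -> 0 <= f i) -> 0 <= sumR n f.
Proof.
  intros H. replace 0 with (sumR n (fun _ => 0)) by (rewrite sumR_const; lra).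
  apply sumR_le; auto.
Qed.

Lemma sumR_term_le n f i : (forall j, (j < n)%nat -> 0 <= f j) -> (i < n)%nat ->
  f i <= sumR n f.
Proof.
  induction n as [|n IH]; intros H Hi; [lia|]. simpl.
  assert (0 <= sumR n f) by (apply sumR_nonneg; intros; apply H; lia).
  assert (0 <= f n) by (apply H; lia).
  destruct (Nat.eq_dec i n) as [->|Hne]; [lra|].
  assert (f i <= sumR n f) by (apply IH; [intros; apply H; lia| lia]). lra.
Qed.

Lemma sumR_two_le n f i i' : (forall j, (j < n)%nat -> 0 <= f j) ->
  (i < i')%nat -> (i' < n)%nat -> f i + f i' <= sumR n f.
Proof.
  induction n as [|n IH]; intros H Hii Hi'; [lia|]. simpl.
  assert (0 <= f n) by (apply H; lia).
  destruct (Nat.eq_dec i' n) as [->|Hne].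
  - assert (f i <= sumR n f) by (apply sumR_term_le; [intros; apply H; lia| lia]). lra.
  - assert (f i + f i' <= sumR n f) by (apply IH; [intros; apply H; lia| lia| lia]). lra.
Qed.

Lemma sumR_zero_each n f : (forall i, (i < n)%nat -> 0 <= f i) -> sumR n f <= 0 ->
  forall i, (i < n)%nat -> f i = 0.
Proof.
  intros H Hs i Hi. pose proof (sumR_term_le n f i H Hi). pose proof (H i Hi). lra.
Qed.

Lemma sumR_single n f i0 : (i0 < n)%nat ->
  (forall i, (i < n)%nat -> i <> i0 -> f i = 0) -> sumR n f = f i0.
Proof.
  induction n as [|n IH]; intros Hi H; [lia|]. simpl.
  destruct (Nat.eq_dec i0 n) as [->|Hne].
  - rewrite (sumR_ext _ _ (fun _ => 0)), sumR_const by (intros; apply H; lia). lra.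
  - rewrite IH, (H n); try lra; try lia. intros; apply H; lia.
Qed.

Definition indicator (j0 j : nat) : R := if Nat.eq_dec j j0 then 1 else 0.

Lemma indicator_binary j0 j : indicator j0 j = 0 \/ indicator j0 j = 1.
Proof. unfold indicator. destruct Nat.eq_dec; auto. Qed.

Lemma sumR_indicator n j0 : (j0 < n)%nat -> sumR n (indicator j0) = 1.
Proof.
  intros Hj. rewrite (sumR_single n _ j0 Hj).
  - unfold indicator. destruct Nat.eq_dec; [lra| congruence].
  - intros j _ Hne. unfold indicator. destruct Nat.eq_dec; [congruence| auto].
Qed.

Lemma minR_le m f j : (j <= m)%nat -> minR m f <= f j.
Proof.
  induction m as [|m IH]; intros Hj; simpl.
  - replace j with 0%nat by lia. lra.
  - destruct (Nat.eq_dec j (S m)) as [->|Hne]; [apply Rmin_r|].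
    eapply Rle_trans; [apply Rmin_l| apply IH; lia].
Qed.

Lemma minR_attained m f : exists j, (j <= m)%nat /\ minR m f = f j.
Proof.
  induction m as [|m [j [Hj E]]]; simpl; [exists 0%nat; auto|].
  unfold Rmin. destruct (Rle_dec (minR m f) (f (S m))).
  - exists j; auto.
  - exists (S m); auto.
Qed.

(** * Nonincreasing rearrangement *)

Fixpoint desc_sorted (l : list R) : Prop :=
  match l with [] => True | h :: t => (forall y, In y t -> y <= h) /\ desc_sorted t end.

Lemma insert_desc_perm y l : Permutation (insert_desc y l) (y :: l).
Proof.
  induction l as [|h t IH]; simpl; auto. destruct Rle_dec; auto.
  eapply perm_trans; [apply perm_skip, IH| apply perm_swap].
Qed.

Lemma sort_desc_perm l : Permutation (sort_desc l) l.
Proof.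
  induction l as [|h t IH]; simpl; auto.
  eapply perm_trans; [apply insert_desc_perm| apply perm_skip, IH].
Qed.

Lemma insert_desc_sorted y l : desc_sorted l -> desc_sorted (insert_desc y l).
Proof.
  induction l as [|h t IH]; simpl; intros H.
  - split; auto. intros ? [].
  - destruct H as [Hh Ht]. destruct Rle_dec as [Hle|Hlt]; simpl.
    + split; auto. intros z Hz.
      apply (Permutation_in _ (insert_desc_perm y t)) in Hz.
      destruct Hz as [<-|Hz]; auto.
    + split; [|split; auto]. intros z [<-|Hz]; [lra|]. specialize (Hh z Hz). lra.
Qed.

Lemma sort_desc_sorted l : desc_sorted (sort_desc l).
Proof. induction l; simpl; auto. apply insert_desc_sorted; auto. Qed.

Lemma desc_sorted_perm_eq l1 l2 :
  desc_sorted l1 -> desc_sorted l2 -> Permutation l1 l2 -> l1 = l2.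
Proof.
  revert l2; induction l1 as [|h1 t1 IH]; intros l2 S1 S2 P.
  - symmetry; apply Permutation_nil; auto.
  - destruct l2 as [|h2 t2].
    { apply Permutation_sym, Permutation_nil in P; discriminate. }
    destruct S1 as [A1 B1], S2 as [A2 B2].
    assert (H21 : h2 <= h1).
    { destruct (Permutation_in _ (Permutation_sym P) (in_eq h2 t2)) as [->|H];
        [lra| apply A1; auto]. }
    assert (H12 : h1 <= h2).
    { destruct (Permutation_in _ P (in_eq h1 t1)) as [->|H]; [lra| apply A2; auto]. }
    replace h2 with h1 in * by lra.
    f_equal. apply IH; auto. eapply Permutation_cons_inv; eauto.
Qed.

Lemma sort_desc_perm_invariant l l' : Permutation l l' -> sort_desc l = sort_desc l'.
Proof.
  intros P. apply desc_sorted_perm_eq; try apply sort_desc_sorted.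
  eapply perm_trans; [apply sort_desc_perm|].
  eapply perm_trans; [apply P| apply Permutation_sym, sort_desc_perm].
Qed.

Lemma sort_desc_id l : desc_sorted l -> sort_desc l = l.
Proof.
  intros H. apply desc_sorted_perm_eq; auto; [apply sort_desc_sorted| apply sort_desc_perm].
Qed.

Lemma insert_desc_head h t : desc_sorted (h :: t) -> insert_desc h t = h :: t.
Proof.
  revert h; induction t as [|h' t IH]; intros h H; simpl; auto.
  destruct H as [A [B C]]. assert (h' <= h) by (apply A; left; auto).
  destruct Rle_dec; auto. replace h' with h in * by lra.
  rewrite IH; auto. split; auto.
Qed.

Lemma insert_desc_mono S1 S2 : Forall2 Rle S1 S2 -> desc_sorted S1 -> desc_sorted S2 ->
  forall x y, x <= y -> Forall2 Rle (insert_desc x S1) (insert_desc y S2).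
Proof.
  induction 1 as [|h1 h2 t1 t2 Hh Ht IH]; intros Q1 Q2 x y Hxy; simpl.
  - constructor; [exact Hxy| constructor].
  - pose proof Q1 as [A1 B1]. pose proof Q2 as [A2 B2].
    destruct (Rle_dec x h1), (Rle_dec y h2).
    + constructor; auto.
    + constructor; [lra|]. rewrite <- (insert_desc_head h2 t2); auto. apply IH; auto. lra.
    + constructor; [lra|]. rewrite <- (insert_desc_head h1 t1); auto. apply IH; auto. lra.
    + constructor; auto.
Qed.

Lemma sort_desc_mono l1 l2 : Forall2 Rle l1 l2 -> Forall2 Rle (sort_desc l1) (sort_desc l2).
Proof. induction 1; simpl; auto. apply insert_desc_mono; auto; apply sort_desc_sorted. Qed.

Lemma sort_desc_shift e l :
  sort_desc (map (fun z => z + e) l) = map (fun z => z + e) (sort_desc l).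
Proof.
  induction l as [|y l IH]; simpl; auto. rewrite IH. clear IH.
  induction (sort_desc l) as [|h S IH]; simpl; auto.
  destruct (Rle_dec (y + e) (h + e)), (Rle_dec y h); try lra; simpl; auto.
  rewrite IH; auto.
Qed.

Lemma nth_map_seq (h : nat -> R) n x : (x < n)%nat -> nth x (map h (seq 0 n)) 0 = h x.
Proof.
  intros Hx. rewrite nth_indep with (d' := h 0%nat) by (rewrite length_map, length_seq; auto).
  rewrite map_nth, seq_nth; auto.
Qed.

Definition kth_largest (n : nat) (f : nat -> R) (k : nat) : R :=
  nth k (sort_desc (map f (seq 0 n))) 0.

Lemma loc_obj_kth_largest d n p r s a lam x :
  loc_obj d n p r s a lam x = sumR n (fun l => lam l * kth_largest n (ftilde d p r s a x) l).
Proof. reflexivity. Qed.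

Lemma kth_largest_step n f l : (l + 1 < n)%nat ->
  kth_largest n f (l + 1) <= kth_largest n f l.
Proof.
  unfold kth_largest. intros Hl. rewrite Nat.add_1_r.
  assert (Hlen : (S l < length (sort_desc (map f (seq 0 n))))%nat)
    by (rewrite (Permutation_length (sort_desc_perm _)), length_map, length_seq; lia).
  generalize (sort_desc_sorted (map f (seq 0 n))). revert l Hlen Hl.
  induction (sort_desc (map f (seq 0 n))) as [|h t IH]; intros l Hlen Hl Hs; simpl in *; [lia|].
  destruct Hs as [A B]. destruct l as [|l].
  - destruct t; simpl in *; [lia|]. apply A; left; auto.
  - apply (IH l); auto; lia.
Qed.

Lemma Forall2_map_seq (f g : nat -> R) st n :
  (forall i, (st <= i < st + n)%nat -> f i <= g i) ->
  Forall2 Rle (map f (seq st n)) (map g (seq st n)).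
Proof.
  revert st; induction n as [|n IH]; intros st H; simpl; constructor.
  - apply H; lia.
  - apply IH; intros; apply H; lia.
Qed.

Lemma Forall2_nth_le l1 l2 : Forall2 Rle l1 l2 -> forall k, nth k l1 0 <= nth k l2 0.
Proof. induction 1; intros [|k]; simpl; auto; lra. Qed.

Lemma kth_largest_mono n f g e : (forall i, (i < n)%nat -> f i <= g i + e) ->
  forall k, (k < n)%nat -> kth_largest n f k <= kth_largest n g k + e.
Proof.
  intros H k Hk. unfold kth_largest.
  assert (F : Forall2 Rle (map f (seq 0 n)) (map (fun z => z + e) (map g (seq 0 n)))).
  { rewrite map_map. apply Forall2_map_seq. intros; apply H; lia. }
  apply sort_desc_mono, (Forall2_nth_le _ _) with (k := k) in F.
  assert (Hshift : forall l j, (j < length l)%nat ->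
            nth j (map (fun z => z + e) l) 0 = nth j l 0 + e).
  { induction l as [|y l IH]; intros [|j] Hj; simpl in *; try lia; auto. apply IH; lia. }
  rewrite sort_desc_shift, Hshift in F; [lra|].
  rewrite (Permutation_length (sort_desc_perm _)), length_map, length_seq; lia.
Qed.

Lemma kth_largest_perm n (h : nat -> R) (sg : nat -> nat) :
  (forall i, (i < n)%nat -> (sg i < n)%nat) ->
  (forall i i', (i < n)%nat -> (i' < n)%nat -> sg i = sg i' -> i = i') ->
  forall k, kth_largest n (fun i => h (sg i)) k = kth_largest n h k.
Proof.
  intros Hsg Hinj k. unfold kth_largest. f_equal.
  apply sort_desc_perm_invariant, Permutation_sym, (Permutation_nth _ _ 0).
  rewrite !length_map, length_seq. split; auto.
  exists sg. split; [|split]; auto.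
  intros i Hi. rewrite !nth_map_seq; auto.
Qed.

Lemma kth_largest_noninc n (th : nat -> R) :
  (forall l, (l + 1 < n)%nat -> th l >= th (l + 1)%nat) ->
  forall l, (l < n)%nat -> kth_largest n th l = th l.
Proof.
  intros Hth l Hl.
  assert (Hchain : forall i j, (i <= j)%nat -> (j < n)%nat -> th j <= th i).
  { intros i j Hij Hj. induction j as [|j IH]; [replace i with 0%nat by lia; lra|].
    destruct (Nat.eq_dec i (S j)) as [->|Hne]; [lra|].
    specialize (Hth j ltac:(lia)). rewrite Nat.add_1_r in Hth.
    assert (th j <= th i) by (apply IH; lia). lra. }
  assert (Hsorted : forall st len, (st + len <= n)%nat -> desc_sorted (map th (seq st len))).
  { intros st len; revert st; induction len as [|len IH]; intros st Hs; simpl; auto.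
    split; [|apply IH; lia].
    intros y Hy. apply in_map_iff in Hy. destruct Hy as [j [<- Hj]]. apply in_seq in Hj.
    apply Hchain; lia. }
  unfold kth_largest. rewrite sort_desc_id by (apply Hsorted; lia). apply nth_map_seq; auto.
Qed.

Lemma sorting_permutation n f : exists sg : nat -> nat,
  (forall l, (l < n)%nat -> (sg l < n)%nat) /\
  (forall l l', (l < n)%nat -> (l' < n)%nat -> sg l = sg l' -> l = l') /\
  (forall l, (l < n)%nat -> kth_largest n f l = f (sg l)).
Proof.
  destruct (proj1 (Permutation_nth (map f (seq 0 n)) (sort_desc (map f (seq 0 n))) 0)
              (Permutation_sym (sort_desc_perm _))) as [_ [sg [H1 [H2 H3]]]].
  rewrite length_map, length_seq in H1, H2, H3.
  exists sg. split; [|split]; auto.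
  intros l Hl. unfold kth_largest. rewrite H3 by auto. apply nth_map_seq; auto.
Qed.

(** * Real powers and the tau-norm *)

Lemma Rpower_pos x y : 0 < Rpower x y.
Proof. unfold Rpower; apply exp_pos. Qed.

Lemma rpow_nonneg x y : 0 <= rpow x y.
Proof. unfold rpow; destruct Rle_dec; [lra| left; apply Rpower_pos]. Qed.

Lemma rpow_pos x y : 0 < x -> rpow x y = Rpower x y.
Proof. intros H; unfold rpow; destruct Rle_dec; [lra|auto]. Qed.

Lemma rpow_zero x y : x <= 0 -> rpow x y = 0.
Proof. intros H; unfold rpow; destruct Rle_dec; [auto|lra]. Qed.

Lemma rpow_eq0 x y : 0 <= x -> rpow x y = 0 -> x = 0.
Proof.
  intros H E. destruct (Rle_dec x 0); [lra|].
  rewrite rpow_pos in E by lra. pose proof (Rpower_pos x y); lra.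
Qed.

Lemma rpow_mono a b y : 0 < y -> a <= b -> rpow a y <= rpow b y.
Proof.
  intros Hy H. destruct (Rle_dec a 0).
  - rewrite rpow_zero by auto. apply rpow_nonneg.
  - rewrite !rpow_pos by lra. apply Rle_Rpower_l; lra.
Qed.

Lemma pow_lt_base a b k : 0 <= a < b -> (1 <= k)%nat -> a ^ k < b ^ k.
Proof.
  intros H Hk. induction k as [|k IH]; [lia|]. destruct k as [|k]; [simpl; lra|].
  change (a * a ^ S k < b * b ^ S k).
  assert (a ^ S k < b ^ S k) by (apply IH; lia).
  assert (0 <= a ^ S k) by (apply pow_le; lra). nra.
Qed.

Lemma Rpower_pow_nat x y k : 0 < x -> Rpower x y ^ k = Rpower x (y * INR k).
Proof. intros H. rewrite <- Rpower_pow by apply Rpower_pos. apply Rpower_mult. Qed.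

Lemma tau_norm_nonneg d r s c : 0 <= tau_norm d r s c.
Proof. apply rpow_nonneg. Qed.

Section TauNorm.
Variables r s : nat.
Hypothesis hrs : (1 <= s <= r)%nat.

Lemma tau_pos : 0 < tau r s.
Proof.
  unfold tau. apply Rdiv_lt_0_compat; apply lt_0_INR; lia.
Qed.

Lemma tau_times_s : tau r s * INR s = INR r.
Proof. unfold tau. assert (0 < INR s) by (apply lt_0_INR; lia). field. lra. Qed.

Lemma tau_minus1_times_s : (tau r s - 1) * INR s = INR (r - s).
Proof. rewrite minus_INR by lia. rewrite Rmult_minus_distr_r, tau_times_s. lra. Qed.

Lemma rpow_tau_pow_s v : 0 <= v -> rpow v (tau r s) ^ s = v ^ r.
Proof.
  intros H. destruct (Rle_dec v 0).
  - replace v with 0 by lra. rewrite rpow_zero by lra. rewrite !pow_i by lia. reflexivity.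
  - rewrite rpow_pos, Rpower_pow_nat, tau_times_s by lra. apply Rpower_pow. lra.
Qed.

Lemma conic_coordinate_bound c v zeta u : 0 < u -> Rabs c <= v -> 0 <= zeta ->
  v ^ r <= zeta ^ s * u ^ (r - s) ->
  rpow (Rabs c) (tau r s) <= zeta * Rpower u (tau r s - 1).
Proof.
  intros Hu Hcv Hz Hconic. pose proof tau_pos as Ht.
  assert (HU : 0 < Rpower u (tau r s - 1)) by apply Rpower_pos.
  eapply Rle_trans; [apply rpow_mono; eauto|].
  destruct (Rle_dec v 0).
  { rewrite rpow_zero by auto. apply Rmult_le_pos; lra. }
  rewrite rpow_pos by lra.
  destruct (Rle_dec (Rpower v (tau r s)) (zeta * Rpower u (tau r s - 1))) as [|Hgt]; auto.
  exfalso.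
  assert (C : (zeta * Rpower u (tau r s - 1)) ^ s < Rpower v (tau r s) ^ s)
    by (apply pow_lt_base; [split; [apply Rmult_le_pos| ]; lra| lia]).
  rewrite Rpow_mult_distr, !Rpower_pow_nat, tau_times_s, tau_minus1_times_s,
    !Rpower_pow in C by lra.
  lra.
Qed.

Lemma tau_norm_le_certificate d (c v zeta : nat -> R) (u : R) :
  0 <= u ->
  (forall k, (k < d)%nat -> Rabs (c k) <= v k /\ 0 <= zeta k) ->
  (forall k, (k < d)%nat -> v k ^ r <= zeta k ^ s * u ^ (r - s)) ->
  sumR d zeta <= u ->
  tau_norm d r s c <= u.
Proof.
  intros Hu Hcv Hconic Hsum. unfold tau_norm. pose proof tau_pos as Ht.
  destruct (Rle_dec u 0) as [Hu0|Hu0].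
  - replace u with 0 in * by lra.
    assert (Hz : forall k, (k < d)%nat -> zeta k = 0)
      by (apply sumR_zero_each; auto; intros; apply Hcv; auto).
    assert (Hc : forall k, (k < d)%nat -> rpow (Rabs (c k)) (tau r s) = 0).
    { intros k Hk. destruct (Hcv k Hk) as [Hck _]. specialize (Hconic k Hk).
      rewrite Hz, pow_i, Rmult_0_l in Hconic by (auto; lia).
      assert (v k <= 0).
      { destruct (Rle_dec (v k) 0); auto. assert (0 < v k ^ r) by (apply pow_lt; lra). lra. }
      apply rpow_zero. lra. }
    rewrite (sumR_ext _ _ (fun _ => 0)), sumR_const, Rmult_0_r, rpow_zero; auto; lra.
  - assert (Hsumtau : sumR d (fun k => rpow (Rabs (c k)) (tau r s)) <= Rpower u (tau r s)).
    { eapply Rle_trans.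
      { apply sumR_le. intros k Hk. destruct (Hcv k Hk).
        apply (conic_coordinate_bound _ (v k)); auto; lra. }
      rewrite (sumR_ext _ _ (fun k => Rpower u (tau r s - 1) * zeta k)) by (intros; lra).
      rewrite sumR_scal.
      replace (Rpower u (tau r s)) with (Rpower u (tau r s - 1) * u).
      - apply Rmult_le_compat_l; auto. left; apply Rpower_pos.
      - rewrite <- (Rpower_1 u) at 2 by lra. rewrite <- Rpower_plus. f_equal; lra. }
    eapply Rle_trans; [apply rpow_mono; [apply Rinv_0_lt_compat; auto| exact Hsumtau]|].
    rewrite rpow_pos by apply Rpower_pos.
    rewrite Rpower_mult, Rinv_r, Rpower_1 by lra. lra.
Qed.

Lemma tau_norm_eq0 d c : tau_norm d r s c = 0 -> forall k, (k < d)%nat -> c k = 0.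
Proof.
  unfold tau_norm. set (S := sumR d (fun k => rpow (Rabs (c k)) (tau r s))). intros H k Hk.
  assert (HS : S <= 0).
  { destruct (Rle_dec S 0) as [|HS]; auto.
    rewrite rpow_pos in H by lra. pose proof (Rpower_pos S (/ tau r s)). lra. }
  pose proof (sumR_zero_each d _ (fun i _ => rpow_nonneg _ _) HS k Hk) as E.
  apply rpow_eq0 in E; [|apply Rabs_pos].
  destruct (Req_dec (c k) 0) as [|Hne]; auto. destruct (Rabs_no_R0 _ Hne E).
Qed.

Lemma tau_norm_pow_tau d c : 0 < tau_norm d r s c ->
  Rpower (tau_norm d r s c) (tau r s) = sumR d (fun k => rpow (Rabs (c k)) (tau r s)).
Proof.
  unfold tau_norm. set (S := sumR d (fun k => rpow (Rabs (c k)) (tau r s))). intros H.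
  pose proof tau_pos.
  assert (HS : 0 < S) by (destruct (Rle_dec S 0); [rewrite rpow_zero in H; lra| lra]).
  rewrite rpow_pos, Rpower_mult, Rinv_l by lra. apply Rpower_1; auto.
Qed.

Definition exact_zeta d (c : nat -> R) (k : nat) : R :=
  let U := tau_norm d r s c in
  if Rlt_dec 0 U then rpow (Rabs (c k)) (tau r s) / Rpower U (tau r s - 1) else 0.

Lemma exact_certificate d c :
  (forall k, 0 <= exact_zeta d c k) /\
  (forall k, (k < d)%nat ->
     Rabs (c k) ^ r <= exact_zeta d c k ^ s * tau_norm d r s c ^ (r - s)) /\
  sumR d (exact_zeta d c) <= tau_norm d r s c.
Proof.
  unfold exact_zeta. set (U := tau_norm d r s c).
  destruct (Rlt_dec 0 U) as [HU|HU].
  - assert (HV : 0 < Rpower U (tau r s - 1)) by apply Rpower_pos.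
    split; [|split].
    + intros k. unfold Rdiv. apply Rmult_le_pos; [apply rpow_nonneg| left; apply Rinv_0_lt_compat; auto].
    + intros k _. unfold Rdiv.
      rewrite Rpow_mult_distr, rpow_tau_pow_s, pow_inv by apply Rabs_pos.
      rewrite Rpower_pow_nat, tau_minus1_times_s, Rpower_pow by auto.
      rewrite Rmult_assoc, Rinv_l; [lra| apply pow_nonzero; lra].
    + rewrite (sumR_ext _ _ (fun k => / Rpower U (tau r s - 1) * rpow (Rabs (c k)) (tau r s)))
        by (intros; unfold Rdiv; lra).
      rewrite sumR_scal, <- tau_norm_pow_tau by auto. change (tau_norm d r s c) with U.
      replace (Rpower U (tau r s)) with (Rpower U (tau r s - 1) * U).
      * field_simplify; lra.
      * rewrite <- (Rpower_1 U) at 2 by auto. rewrite <- Rpower_plus. f_equal; lra.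
  - assert (HU0 : U = 0) by (pose proof (tau_norm_nonneg d r s c); unfold U in *; lra).
    split; [|split].
    + intros; lra.
    + intros k Hk. rewrite (tau_norm_eq0 d c HU0 k Hk), Rabs_R0, !pow_i by lia. lra.
    + rewrite sumR_const. lra.
Qed.

End TauNorm.

(** * Binary assignment matrices *)

Lemma binary_sum_one (z : nat -> R) p : (forall j, (j < p)%nat -> z j = 0 \/ z j = 1) ->
  sumR p z = 1 -> exists j, (j < p)%nat /\ z j = 1.
Proof.
  induction p as [|p IH]; simpl; intros H E; [lra|].
  destruct (H p ltac:(lia)) as [E0|E1].
  - destruct IH as [j [Hj Ej]]; [intros; apply H; lia| lra| exists j; auto].
  - exists p; auto.
Qed.

Lemma binary_assignment_perm n (w : nat -> nat -> R) :
  (forall i l, (i < n)%nat -> (l < n)%nat -> w i l = 0 \/ w i l = 1) ->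
  (forall l, (l < n)%nat -> sumR n (fun i => w i l) = 1) ->
  (forall i, (i < n)%nat -> sumR n (fun l => w i l) = 1) ->
  exists sg : nat -> nat,
    (forall i, (i < n)%nat -> (sg i < n)%nat /\ w i (sg i) = 1) /\
    (forall i i', (i < n)%nat -> (i' < n)%nat -> sg i = sg i' -> i = i').
Proof.
  intros Hbin Hcol Hrow.
  destruct (choice (fun i l => (i < n)%nat -> (l < n)%nat /\ w i l = 1)) as [sg Hsg].
  { intros i. destruct (lt_dec i n) as [Hi|Hi].
    - destruct (binary_sum_one (w i) n (fun l Hl => Hbin i l Hi Hl) (Hrow i Hi)) as [l Hl].
      exists l; auto.
    - exists 0%nat; intros; lia. }
  exists sg. split; auto.
  assert (Hcol1 : forall i i' l, (i < i')%nat -> (i' < n)%nat -> (l < n)%nat ->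
                    w i l = 1 -> w i' l = 1 -> False).
  { intros i i' l Hii' Hi' Hl E E'.
    assert (Htwo : w i l + w i' l <= sumR n (fun k => w k l)).
    { apply (sumR_two_le n (fun k => w k l)); auto.
      intros k Hk. destruct (Hbin k l Hk Hl); lra. }
    rewrite E, E', Hcol in Htwo by auto. lra. }
  intros i i' Hi Hi' E. destruct (Hsg i Hi) as [Hl Hw]. destruct (Hsg i' Hi') as [_ Hw'].
  rewrite <- E in Hw'.
  destruct (Nat.lt_total i i') as [Hlt|[Heq|Hgt]]; auto; exfalso; eauto.
Qed.

Lemma ftilde_le d p r s a x i j : (j < p)%nat ->
  ftilde d p r s a x i <= tau_norm d r s (fun k => x j k - a i k).
Proof.
  intros Hj. apply (minR_le _ (fun j0 => tau_norm d r s (fun k => x j0 k - a i k))). lia.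
Qed.

Lemma ftilde_attained d p r s a x i : (1 <= p)%nat ->
  exists j, (j < p)%nat /\ ftilde d p r s a x i = tau_norm d r s (fun k => x j k - a i k).
Proof.
  intros Hp. destruct (minR_attained (p - 1) (fun j => tau_norm d r s (fun k => x j k - a i k)))
    as [j [Hj E]].
  exists j. split; [lia| exact E].
Qed.

Lemma ftilde_nonneg d p r s a x i : 0 <= ftilde d p r s a x i.
Proof.
  destruct (minR_attained (p - 1) (fun j => tau_norm d r s (fun k => x j k - a i k)))
    as [j [_ E]].
  unfold ftilde. rewrite E. apply tau_norm_nonneg.
Qed.

(* In a feasible point of (MFOMP_lambda), t_i bounds the distance from a_i
   to its closest facility: the facility j with z_ij = 1 has
   ||x_j - a_i||_tau <= u_ij <= t_i. *)
Lemma mf_ftilde_le_t d n p r s m g a UB x z u v zeta w t theta :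
  (1 <= s <= r)%nat ->
  mf_feasible d n p r s m g a UB true x z u v zeta w t theta ->
  forall i, (i < n)%nat -> ftilde d p r s a x i <= t i.
Proof.
  intros hrs F i Hi. cbv zeta beta iota in F.
  destruct F as (_ & _ & _ & Hvz & Hu & _ & Hz & _ & _ & Hut & Hv & Hconic & Hzeta & Hzrow & _).
  destruct (binary_sum_one (z i) p (fun j Hj => Hz i j Hi Hj) (Hzrow i Hi)) as [j [Hj Ej]].
  assert (Hnorm : tau_norm d r s (fun k => x j k - a i k) <= u i j).
  { apply (tau_norm_le_certificate r s hrs d _ (v i j) (zeta i j)); auto.
    intros k Hk. destruct (Hvz i j k Hi Hj Hk), (Hv i j k Hi Hj Hk).
    split; auto. apply Rabs_le; lra. }
  specialize (Hut i j Hi Hj). rewrite Ej in Hut.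
  pose proof (ftilde_le d p r s a x i j Hj). lra.
Qed.

Lemma loc_obj_le_mf_obj d n p r s m g a UB lam x z u v zeta w t theta :
  (1 <= s <= r)%nat ->
  (forall i, (i < n)%nat -> 0 <= lam i) ->
  mf_feasible d n p r s m g a UB true x z u v zeta w t theta ->
  loc_obj d n p r s a lam x <= mf_obj n lam theta.
Proof.
  intros hrs hlam F.
  pose proof (mf_ftilde_le_t d n p r s m g a UB x z u v zeta w t theta hrs F) as Hft.
  cbv zeta beta iota in F.
  destruct F as (_ & _ & _ & _ & _ & Hw & _ & Htw & Hmono & _ & _ & _ & _ & _ & Hwcol & Hwrow).
  destruct (binary_assignment_perm n w Hw Hwcol Hwrow) as [sg [Hsg Hinj]].
  assert (Hkth : forall l, (l < n)%nat -> kth_largest n (ftilde d p r s a x) l <= theta l).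
  { intros l Hl.
    rewrite <- (kth_largest_noninc n theta Hmono l Hl),
      <- (kth_largest_perm n theta sg (fun i Hi => proj1 (Hsg i Hi)) Hinj).
    rewrite <- (Rplus_0_r (kth_largest n (fun i => theta (sg i)) l)).
    apply kth_largest_mono; auto. intros i Hi. destruct (Hsg i Hi) as [Hl' Hw1].
    specialize (Htw i (sg i) Hi Hl'). rewrite Hw1 in Htw. specialize (Hft i Hi). lra. }
  rewrite loc_obj_kth_largest. unfold mf_obj. apply sumR_le. intros l Hl.
  apply Rmult_le_compat_l; auto.
Qed.

Definition perm_matrix (sg : nat -> nat) (i l : nat) : R := indicator (sg l) i.

Lemma perm_matrix_sums n sg :
  (forall l, (l < n)%nat -> (sg l < n)%nat) ->
  (forall l l', (l < n)%nat -> (l' < n)%nat -> sg l = sg l' -> l = l') ->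
  (forall l, (l < n)%nat -> sumR n (fun i => perm_matrix sg i l) = 1) /\
  (forall i, (i < n)%nat -> sumR n (fun l => perm_matrix sg i l) = 1).
Proof.
  intros Hsg Hinj. split.
  - intros l Hl. apply sumR_indicator; auto.
  - intros i Hi. destruct (proj1 (bInjective_bSurjective Hsg) Hinj i Hi) as [l0 [Hl0 E]].
    rewrite (sumR_single n _ l0 Hl0).
    + unfold perm_matrix, indicator. destruct Nat.eq_dec; [lra| congruence].
    + intros l Hl Hne. unfold perm_matrix, indicator. destruct Nat.eq_dec; auto.
      exfalso. apply Hne, Hinj; auto. congruence.
Qed.

(* Every location vector in K^p lifts to a feasible point of (MFOMP_lambda)
   with the same objective: z assigns each client to a closest facility,
   u_ij = ||x_j - a_i||_tau with its exact certificate, t = ftilde, theta is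
   the sorted t, and w is the permutation matrix of a sorting permutation. *)
Lemma mf_lift d n p r s m g a UB lam x :
  (1 <= s <= r)%nat -> (1 <= p)%nat ->
  (forall i, (i < n)%nat -> forall y, inK m g y -> tau_norm d r s (fun k => y k - a i k) <= UB i) ->
  loc_feasible p m g x ->
  exists z u v zeta w t theta,
    mf_feasible d n p r s m g a UB true x z u v zeta w t theta /\
    mf_obj n lam theta = loc_obj d n p r s a lam x.
Proof.
  intros hrs hp hUB Hx.
  set (f := ftilde d p r s a x).
  set (nrm := fun i j => tau_norm d r s (fun k => x j k - a i k)).
  assert (HnUB : forall i j, (i < n)%nat -> (j < p)%nat -> nrm i j <= UB i)
    by (intros; apply hUB; auto).
  destruct (choice (fun i j => (j < p)%nat /\ f i = nrm i j)) as [js Hjs].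
  { intros i; apply ftilde_attained; auto. }
  assert (Hf0 : forall i, 0 <= f i) by (intros; apply ftilde_nonneg).
  assert (HfUB : forall i, (i < n)%nat -> f i <= UB i).
  { intros i Hi. destruct (Hjs i) as [Hj ->]. apply HnUB; auto. }
  destruct (sorting_permutation n f) as [sg [Hsg [Hinj Hkth]]].
  destruct (perm_matrix_sums n sg Hsg Hinj) as [Hwcol Hwrow].
  assert (Hcert := fun i j => exact_certificate r s hrs d (fun k => x j k - a i k)).
  exists (fun i j => indicator (js i) j), nrm, (fun i j k => Rabs (x j k - a i k)),
    (fun i j => exact_zeta r s d (fun k => x j k - a i k)), (perm_matrix sg), f,
    (kth_largest n f).
  split; [|reflexivity].
  unfold mf_feasible; cbv zeta beta iota.
  split; [exact Hx|]. split; [intros l Hl; rewrite Hkth; auto|].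
  split; [auto|]. split; [intros; split; [apply Rabs_pos| apply Hcert]|].
  split; [intros; apply tau_norm_nonneg|].
  split; [intros; apply indicator_binary|]. split; [intros; apply indicator_binary|].
  split.
  { intros i l Hi Hl. rewrite Hkth by auto. unfold perm_matrix, indicator.
    destruct Nat.eq_dec as [->|]; [lra|]. pose proof (HfUB i Hi). pose proof (Hf0 (sg l)). lra. }
  split; [intros l Hl; apply Rle_ge, kth_largest_step; auto|].
  split.
  { intros i j Hi Hj. unfold indicator. destruct Nat.eq_dec as [->|].
    - destruct (Hjs i) as [_ E]. rewrite <- E. lra.
    - pose proof (HnUB i j Hi Hj). pose proof (Hf0 i). lra. }
  split.
  { intros i j k _ _ _. pose proof (Rle_abs (x j k - a i k)).
    pose proof (Rle_abs (-(x j k - a i k))). rewrite Rabs_Ropp in *. split; lra. }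
  split; [intros; apply Hcert; auto|]. split; [intros; apply Hcert|].
  split; [intros i Hi; apply sumR_indicator, Hjs|]. auto.
Qed.

Lemma mf_relaxed_strict_feasible d n p r s m g a UB x z u v zeta w t theta :
  mf_relaxed_strict d n p r s m g a UB x z u v zeta w t theta ->
  mf_feasible d n p r s m g a UB false x z u v zeta w t theta.
Proof.
  intros (F1 & F2 & F3 & F4 & F5 & F6 & F7 & F8 & F9 & F10 & F11 & F12 & F13 & F14 & F15 & F16).
  unfold mf_feasible; cbv zeta beta iota.
  split; [intros j Hj k Hk; left; apply F1; auto|].
  split; [intros; left; apply F2; auto|].
  split; [intros; left; apply F3; auto|].
  split; [intros i j k Hi Hj Hk; destruct (F4 i j k Hi Hj Hk); split; lra|].
  split; [intros; left; apply F5; auto|].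
  split; [intros i l Hi Hl; destruct (F6 i l Hi Hl); split; lra|].
  split; [intros i l Hi Hl; destruct (F7 i l Hi Hl); split; lra|].
  split; [intros; left; apply F8; auto|].
  split; [intros l Hl; specialize (F9 l Hl); lra|].
  split; [intros; left; apply F10; auto|].
  split; [intros i j k Hi Hj Hk; destruct (F11 i j k Hi Hj Hk); split; lra|].
  split; [intros; left; apply F12; auto|].
  split; [intros; left; apply F13; auto|].
  auto.
Qed.

Lemma inv_INR_unit n : (1 <= n)%nat -> 0 < / INR n <= 1.
Proof.
  intros H. assert (1 <= INR n) by (change 1 with (INR 1); apply le_INR; auto).
  split; [apply Rinv_0_lt_compat; lra|]. rewrite <- Rinv_1. apply Rinv_le_contravar; lra.
Qed.

Lemma sumR_uniform n : (1 <= n)%nat -> sumR n (fun _ => / INR n) = 1.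
Proof.
  intros H. rewrite sumR_const. apply Rinv_r. assert (0 < INR n) by (apply lt_0_INR; lia). lra.
Qed.

Lemma conic_strict r s v u : (1 <= s <= r)%nat -> 0 < v <= u ->
  v ^ r < (v + 1) ^ s * u ^ (r - s).
Proof.
  intros hrs Hvu. replace r with (s + (r - s))%nat at 1 by lia. rewrite pow_add.
  assert (v ^ s < (v + 1) ^ s) by (apply pow_lt_base; [lra| lia]).
  assert (v ^ (r - s) <= u ^ (r - s)) by (apply pow_incr; lra).
  assert (0 < v ^ (r - s)) by (apply pow_lt; lra).
  assert (0 <= (v + 1) ^ s) by (apply pow_le; lra).
  apply Rlt_le_trans with ((v + 1) ^ s * v ^ (r - s)).
  - apply Rmult_lt_compat_r; auto.
  - apply Rmult_le_compat_l; auto.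
Qed.

Lemma strictly_decreasing_above n (t : nat -> R) : (forall i, 0 <= t i) ->
  exists theta : nat -> R,
    (forall l, (l < n)%nat -> 0 < theta l) /\
    (forall i l, (i < n)%nat -> (l < n)%nat -> t i < theta l) /\
    (forall l, (l + 1 < n)%nat -> theta l > theta (l + 1)%nat).
Proof.
  intros Ht. set (T := sumR n t + 1).
  assert (HT : forall i, (i < n)%nat -> t i < T).
  { intros i Hi. assert (t i <= sumR n t) by (apply sumR_term_le; auto). unfold T; lra. }
  assert (0 < T) by (pose proof (sumR_nonneg n t (fun i _ => Ht i)); unfold T; lra).
  exists (fun l => T + INR n - INR l). split; [|split].
  - intros l Hl. assert (INR l < INR n) by (apply lt_INR; auto). lra.
  - intros i l Hi Hl. assert (INR l < INR n) by (apply lt_INR; auto). pose proof (HT i Hi). lra.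
  - intros l Hl. rewrite plus_INR. simpl (INR 1). lra.
Qed.

(* From a Slater point x0 of K: all facilities at x0, uniform fractional
   assignments, v = |x0 - a_i| + 1, zeta = v + 1, u larger than sum zeta,
   t larger than u, and a strictly decreasing theta above all t. *)
Lemma mf_relaxed_slater d n p r s m g a UB :
  (1 <= s <= r)%nat -> (1 <= p)%nat -> (1 <= n)%nat ->
  (forall i, (i < n)%nat -> 0 <= UB i) ->
  slater_K m g ->
  exists x z u v zeta w t theta,
    mf_feasible d n p r s m g a UB false x z u v zeta w t theta /\
    mf_relaxed_strict d n p r s m g a UB x z u v zeta w t theta.
Proof.
  intros hrs hp hn hUB [x0 Hx0].
  set (v := fun i k => Rabs (x0 k - a i k) + 1).
  assert (Hv : forall i k, 1 <= v i k) by (intros; unfold v; pose proof (Rabs_pos (x0 k - a i k)); lra).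
  set (U := fun i => sumR d (fun k => v i k + 1) + 1).
  assert (HsumU : forall i, sumR d (fun k => v i k + 1) < U i) by (intros; unfold U; lra).
  assert (HvU : forall i k, (k < d)%nat -> v i k + 1 < U i).
  { intros i k Hk. eapply Rle_lt_trans; [|apply HsumU].
    apply (sumR_term_le d (fun k => v i k + 1)); auto. intros j _; pose proof (Hv i j); lra. }
  assert (HU : forall i, 1 <= U i).
  { intros i. unfold U.
    assert (0 <= sumR d (fun k => v i k + 1)); [|lra].
    apply sumR_nonneg; intros j _; pose proof (Hv i j); lra. }
  set (t := fun i => U i + 1).
  destruct (strictly_decreasing_above n t) as [theta [Hth0 [Htth Hdec]]].
  { intros i. unfold t. pose proof (HU i). lra. }
  pose proof (inv_INR_unit n hn). pose proof (inv_INR_unit p hp).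
  exists (fun _ => x0), (fun _ _ => / INR p), (fun i _ => U i), (fun i _ k => v i k),
    (fun i _ k => v i k + 1), (fun _ _ => / INR n), t, theta.
  enough (S : mf_relaxed_strict d n p r s m g a UB (fun _ => x0) (fun _ _ => / INR p)
    (fun i _ => U i) (fun i _ k => v i k) (fun i _ k => v i k + 1) (fun _ _ => / INR n) t theta)
    by (split; auto; apply mf_relaxed_strict_feasible; auto).
  split; [intros; apply Hx0; auto|]. split; [auto|].
  split; [intros i Hi; unfold t; pose proof (HU i); lra|].
  split; [intros i j k _ _ _; pose proof (Hv i k); split; lra|].
  split; [intros i _ _ _; pose proof (HU i); lra|].
  split; [auto|]. split; [auto|].
  split.
  { intros i l Hi Hl. pose proof (Htth i l Hi Hl).
    assert (0 <= UB i * (1 - / INR n)) by (apply Rmult_le_pos; [apply hUB; auto| lra]). lra. }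
  split; [auto|].
  split.
  { intros i j Hi _. unfold t.
    assert (0 <= UB i * (1 - / INR p)) by (apply Rmult_le_pos; [apply hUB; auto| lra]). lra. }
  split.
  { intros i j k _ _ _. unfold v. pose proof (Rle_abs (x0 k - a i k)).
    pose proof (Rle_abs (-(x0 k - a i k))). rewrite Rabs_Ropp in *. split; lra. }
  split.
  { intros i j k _ _ Hk. apply conic_strict; auto. pose proof (Hv i k). pose proof (HvU i k Hk). lra. }
  split; [intros; apply HsumU|].
  split; [intros; apply sumR_uniform; auto|].
  split; intros; apply sumR_uniform; auto.
Qed.

(** * Continuity of the ordered median objective *)

Lemma cv_const c : Un_cv (fun _ => c) c.
Proof. intros e He; exists 0%nat; intros; unfold Rdist; rewrite Rminus_diag, Rabs_R0; lra. Qed.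

Lemma sumR_cv n (F : nat -> nat -> R) (L : nat -> R) :
  (forall i, (i < n)%nat -> Un_cv (fun k => F k i) (L i)) ->
  Un_cv (fun k => sumR n (F k)) (sumR n L).
Proof.
  induction n as [|n IH]; intros H; simpl; [apply cv_const|].
  apply CV_plus; [apply IH; intros; apply H; lia| apply H; lia].
Qed.

(* Rmin is 1-Lipschitz in each argument, hence continuous. *)
Lemma Rmin_cv (A B : nat -> R) a b : Un_cv A a -> Un_cv B b ->
  Un_cv (fun k => Rmin (A k) (B k)) (Rmin a b).
Proof.
  intros HA HB e He. destruct (HA e He) as [N1 H1]. destruct (HB e He) as [N2 H2].
  exists (max N1 N2). intros k Hk. unfold Rdist in *.
  specialize (H1 k ltac:(lia)). specialize (H2 k ltac:(lia)).
  apply Rabs_def2 in H1, H2. apply Rabs_def1; unfold Rmin;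
    destruct (Rle_dec (A k) (B k)), (Rle_dec a b); lra.
Qed.

Lemma minR_cv m (F : nat -> nat -> R) (L : nat -> R) :
  (forall j, (j <= m)%nat -> Un_cv (fun k => F k j) (L j)) ->
  Un_cv (fun k => minR m (F k)) (minR m L).
Proof.
  induction m as [|m IH]; intros H; simpl; [apply H; lia|].
  apply Rmin_cv; [apply IH; intros; apply H; lia| apply H; lia].
Qed.

Lemma kth_largest_cv n (F : nat -> nat -> R) L :
  (forall i, (i < n)%nat -> Un_cv (fun k => F k i) (L i)) ->
  forall l, (l < n)%nat -> Un_cv (fun k => kth_largest n (F k) l) (kth_largest n L l).
Proof.
  intros H l Hl e He.
  assert (He2 : 0 < e / 2) by lra.
  assert (Hunif : forall m, (m <= n)%nat -> exists N, forall k, (k >= N)%nat ->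
                    forall i, (i < m)%nat -> Rabs (F k i - L i) < e / 2).
  { induction m as [|m IH]; intros Hm; [exists 0%nat; intros; lia|].
    destruct (IH ltac:(lia)) as [N1 H1]. destruct (H m ltac:(lia) _ He2) as [N2 H2].
    exists (max N1 N2); intros k Hk i Hi.
    destruct (Nat.eq_dec i m) as [->|]; [apply H2; lia| apply H1; lia]. }
  destruct (Hunif n (le_n _)) as [N HN]. exists N; intros k Hk. unfold Rdist.
  assert (Hclose : forall i, (i < n)%nat -> F k i - L i < e / 2 /\ - (e / 2) < F k i - L i)
    by (intros i Hi; apply Rabs_def2, HN; auto).
  pose proof (kth_largest_mono n (F k) L (e / 2) ltac:(intros i Hi; specialize (Hclose i Hi); lra) l Hl).
  pose proof (kth_largest_mono n L (F k) (e / 2) ltac:(intros i Hi; specialize (Hclose i Hi); lra) l Hl).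
  apply Rabs_def1; lra.
Qed.

Lemma rpow_continuous e y0 : 0 < e -> continuity_pt (fun y => rpow y e) y0.
Proof.
  intros He. destruct (Rle_dec y0 0) as [Hy|Hy].
  - intros eps Heps. set (dl := Rpower eps (/ e)). assert (Hdl : 0 < dl) by apply Rpower_pos.
    exists dl. split; [lra|]. intros x [_ Hx]. simpl in *. unfold R_dist in *.
    rewrite (rpow_zero y0), Rminus_0_r, Rabs_pos_eq by (auto; apply rpow_nonneg).
    destruct (Rle_dec x 0); [rewrite rpow_zero by auto; lra|].
    rewrite rpow_pos by lra. apply Rabs_def2 in Hx.
    replace eps with (Rpower dl e).
    + apply Rlt_Rpower_l; lra.
    + unfold dl. rewrite Rpower_mult, Rinv_l by lra. apply Rpower_1; lra.
  - assert (Hy' : 0 < y0) by lra.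
    assert (C := derivable_continuous_pt _ _ (exist _ _ (derivable_pt_lim_power y0 e Hy'))).
    intros eps Heps. destruct (C eps Heps) as [alp [Ha H]].
    exists (Rmin alp y0). split; [apply Rmin_glb_lt; lra|].
    intros x [Dx Hx]. simpl in *. unfold R_dist in *.
    assert (Hx1 : Rabs (x - y0) < alp) by (eapply Rlt_le_trans; [apply Hx| apply Rmin_l]).
    assert (Hx2 : Rabs (x - y0) < y0) by (eapply Rlt_le_trans; [apply Hx| apply Rmin_r]).
    apply Rabs_def2 in Hx2. rewrite !rpow_pos by lra. apply (H x). split; auto.
Qed.

Lemma tau_norm_cv d r s (Y : nat -> nat -> R) Ys : (1 <= s <= r)%nat ->
  (forall k, (k < d)%nat -> Un_cv (fun t => Y t k) (Ys k)) ->
  Un_cv (fun t => tau_norm d r s (Y t)) (tau_norm d r s Ys).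
Proof.
  intros hrs H. pose proof (tau_pos r s hrs). unfold tau_norm.
  apply (continuity_seq (fun y => rpow y (/ tau r s))).
  { apply rpow_continuous, Rinv_0_lt_compat; auto. }
  apply sumR_cv. intros k Hk. apply (continuity_seq (fun y => rpow y (tau r s))).
  { apply rpow_continuous; auto. }
  apply (continuity_seq Rabs); [apply Rcontinuity_abs| apply H; auto].
Qed.

Lemma loc_obj_cv d n p r s a lam (X : nat -> nat -> nat -> R) Xs :
  (1 <= s <= r)%nat -> (1 <= p)%nat ->
  (forall j k, (j < p)%nat -> (k < d)%nat -> Un_cv (fun t => X t j k) (Xs j k)) ->
  Un_cv (fun t => loc_obj d n p r s a lam (X t)) (loc_obj d n p r s a lam Xs).
Proof.
  intros hrs hp H. rewrite loc_obj_kth_largest.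
  apply (sumR_cv n (fun t l => lam l * kth_largest n (ftilde d p r s a (X t)) l)).
  intros l Hl. apply CV_mult; [apply cv_const|].
  apply (kth_largest_cv n (fun t => ftilde d p r s a (X t))); auto.
  intros i Hi. apply (minR_cv (p - 1) (fun t j => tau_norm d r s (fun k => X t j k - a i k))).
  intros j Hj. apply (tau_norm_cv d r s (fun t k => X t j k - a i k)); auto.
  intros k Hk. apply CV_minus; [apply H; auto; lia| apply cv_const].
Qed.

(* Polynomials are continuous, so K is closed. *)
Lemma peval_cv d q (Y : nat -> nat -> R) Ys : poly_in d q ->
  (forall k, (k < d)%nat -> Un_cv (fun t => Y t k) (Ys k)) ->
  Un_cv (fun t => peval q (Y t)) (peval q Ys).
Proof.
  induction q; simpl; intros Hq H.
  - apply H; auto.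
  - apply cv_const.
  - destruct Hq. apply CV_plus; auto.
  - destruct Hq. apply CV_mult; auto.
Qed.

(** * Bolzano-Weierstrass for finitely many coordinates *)

Lemma inv_succ_cv0 : Un_cv (fun t => / (INR t + 1)) 0.
Proof.
  intros e He. destruct (INR_unbounded (/ e)) as [N HN]. exists N. intros t Ht. unfold Rdist.
  assert (INR N <= INR t) by (apply le_INR; lia). pose proof (pos_INR N).
  rewrite Rminus_0_r, Rabs_pos_eq by (left; apply Rinv_0_lt_compat; lra).
  rewrite <- (Rinv_inv e). apply Rinv_lt_contravar; [|lra].
  apply Rmult_lt_0_compat; [apply Rinv_0_lt_compat|]; lra.
Qed.

Definition strictly_increasing (phi : nat -> nat) : Prop := forall k, (phi k < phi (S k))%nat.

Lemma strictly_increasing_ge phi : strictly_increasing phi -> forall k, (k <= phi k)%nat.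
Proof. intros H k; induction k as [|k IH]; [lia|]. specialize (H k); lia. Qed.

Lemma strictly_increasing_comp phi psi : strictly_increasing phi -> strictly_increasing psi ->
  strictly_increasing (fun k => phi (psi k)).
Proof.
  intros Hphi Hpsi k.
  assert (Hlt : forall a b, (a < b)%nat -> (phi a < phi b)%nat).
  { intros a b Hab; induction b as [|b IH]; [lia|].
    destruct (Nat.eq_dec a b) as [->|]; [apply Hphi|].
    specialize (Hphi b). assert (phi a < phi b)%nat by (apply IH; lia). lia. }
  apply Hlt, Hpsi.
Qed.

Lemma cv_subseq u l (psi : nat -> nat) : Un_cv u l -> strictly_increasing psi ->
  Un_cv (fun k => u (psi k)) l.
Proof.
  intros H Hp e He. destruct (H e He) as [N HN]. exists N. intros k Hk. apply HN.
  pose proof (strictly_increasing_ge psi Hp k); lia.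
Qed.

(* Given, for each threshold N and precision k, an index nx N k >= N, the
   subsequence whose k-th index is nx (previous index + 1) k. *)
Fixpoint diagonal_indices (nx : nat -> nat -> nat) (k : nat) : nat :=
  match k with O => nx O O | S k' => nx (S (diagonal_indices nx k')) (S k') end.

Lemma bounded_subseq_cv (u : nat -> R) M : (forall k, Rabs (u k) <= M) ->
  exists psi, strictly_increasing psi /\ exists l, Un_cv (fun k => u (psi k)) l.
Proof.
  intros Hb.
  destruct (Bolzano_Weierstrass u (fun c => -M <= c <= M) (compact_P3 (-M) M)) as [l Hl].
  { intros k; specialize (Hb k). pose proof (Rle_abs (u k)). pose proof (Rle_abs (- u k)).
    rewrite Rabs_Ropp in *. lra. }
  destruct (choice (fun N h => forall k, (N <= h k)%nat /\ Rabs (u (h k) - l) < / (INR k + 1)))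
    as [nx Hnx].
  { intros N. apply (choice (fun k q => (N <= q)%nat /\ Rabs (u q - l) < / (INR k + 1))).
    intros k. assert (Hp : 0 < / (INR k + 1))
      by (apply Rinv_0_lt_compat; pose proof (pos_INR k); lra).
    destruct (Hl (disc l (mkposreal _ Hp)) N) as [q [Hq Hd]];
      [exists (mkposreal _ Hp); intros y Hy; auto|].
    exists q; auto. }
  exists (diagonal_indices nx). split.
  - intros k. simpl. destruct (Hnx (S (diagonal_indices nx k)) (S k)). lia.
  - exists l. intros e He. destruct (inv_succ_cv0 e He) as [K HK]. exists K. intros k Hk.
    specialize (HK k Hk). unfold Rdist in *. rewrite Rminus_0_r, Rabs_pos_eq in HK
      by (left; apply Rinv_0_lt_compat; pose proof (pos_INR k); lra).
    eapply Rlt_trans; [|exact HK]. destruct k; simpl; apply Hnx.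
Qed.

Lemma bounded_subseq_cv_coords (X : nat -> nat -> nat -> R) M (cs : list (nat * nat)) :
  (forall t c, In c cs -> Rabs (X t (fst c) (snd c)) <= M) ->
  exists phi, strictly_increasing phi /\ exists L : nat -> nat -> R,
    forall c, In c cs -> Un_cv (fun t => X (phi t) (fst c) (snd c)) (L (fst c) (snd c)).
Proof.
  induction cs as [|c cs IH]; intros Hb.
  - exists (fun k => k). split; [intros k; lia|]. exists (fun _ _ => 0). intros c [].
  - destruct IH as [phi [Hphi [L HL]]]; [intros; apply Hb; right; auto|].
    destruct (bounded_subseq_cv (fun t => X (phi t) (fst c) (snd c)) M) as [psi [Hpsi [l Hl]]].
    { intros; apply Hb; left; auto. }
    exists (fun t => phi (psi t)). split; [apply strictly_increasing_comp; auto|].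
    exists (fun j k => if Nat.eq_dec j (fst c) then if Nat.eq_dec k (snd c) then l else L j k
                    else L j k).
    intros c' Hc'. destruct (Nat.eq_dec (fst c') (fst c)), (Nat.eq_dec (snd c') (snd c)).
    + replace c' with c by (destruct c, c'; simpl in *; congruence). auto.
    + destruct Hc' as [->|Hc']; [congruence|].
      apply (cv_subseq (fun t => X (phi t) (fst c') (snd c'))); auto.
    + destruct Hc' as [->|Hc']; [congruence|].
      apply (cv_subseq (fun t => X (phi t) (fst c') (snd c'))); auto.
    + destruct Hc' as [->|Hc']; [congruence|].
      apply (cv_subseq (fun t => X (phi t) (fst c') (snd c'))); auto.
Qed.

Lemma loc_obj_nonneg d n p r s a lam x : (forall i, (i < n)%nat -> 0 <= lam i) ->
  0 <= loc_obj d n p r s a lam x.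
Proof.
  intros hlam. destruct (sorting_permutation n (ftilde d p r s a x)) as [sg [_ [_ Hkth]]].
  rewrite loc_obj_kth_largest. apply sumR_nonneg. intros l Hl.
  rewrite Hkth by auto. apply Rmult_le_pos; [auto| apply ftilde_nonneg].
Qed.

Lemma inf_approx {A : Type} (P : A -> Prop) (F : A -> R) c :
  (exists x, P x) -> (forall x, P x -> c <= F x) ->
  exists mn, (forall x, P x -> mn <= F x) /\
    forall k, exists x, P x /\ F x < mn + / (INR k + 1).
Proof.
  intros [x0 Hx0] Hc.
  destruct (completeness (fun y => exists x, P x /\ y = - F x)) as [M [HM1 HM2]].
  { exists (- c). intros y [x [Hx ->]]. specialize (Hc x Hx). lra. }
  { exists (- F x0), x0. auto. }
  exists (- M). split.
  - intros x Hx. assert (- F x <= M) by (apply HM1; exists x; auto). lra.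
  - intros k. assert (Hp : 0 < / (INR k + 1))
      by (apply Rinv_0_lt_compat; pose proof (pos_INR k); lra).
    apply NNPP. intros Hno. assert (M <= M - / (INR k + 1)); [|lra].
    apply HM2. intros y [x [Hx ->]].
    destruct (Rlt_dec (F x) (- M + / (INR k + 1))) as [Hlt|]; [|lra].
    exfalso. apply Hno. exists x. auto.
Qed.

Lemma loc_feasible_cluster d p m g B (X : nat -> nat -> nat -> R) :
  (forall k, (k < m)%nat -> poly_in d (g k)) ->
  (forall y, inK m g y -> sumR d (fun k => y k ^ 2) <= B) ->
  (forall t, loc_feasible p m g (X t)) ->
  exists phi L, strictly_increasing phi /\ loc_feasible p m g L /\
    forall j k, (j < p)%nat -> (k < d)%nat -> Un_cv (fun t => X (phi t) j k) (L j k).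
Proof.
  intros hg HB HX.
  set (cs := list_prod (seq 0 p) (seq 0 d)).
  assert (Hcs : forall j k, In (j, k) cs <-> (j < p)%nat /\ (k < d)%nat)
    by (intros j k; unfold cs; rewrite in_prod_iff, !in_seq; lia).
  destruct (bounded_subseq_cv_coords X (B + 1) cs) as [phi [Hphi [L HL]]].
  { intros t [j k] Hc. apply Hcs in Hc. destruct Hc as [Hj Hk]. simpl.
    assert (Hsq : X t j k ^ 2 <= B).
    { eapply Rle_trans; [|apply HB, HX, Hj].
      apply (sumR_term_le d (fun k0 => X t j k0 ^ 2)); auto. intros; apply pow2_ge_0. }
    rewrite <- (pow2_abs (X t j k)) in Hsq. pose proof (Rabs_pos (X t j k)). nra. }
  assert (Hcv : forall j k, (j < p)%nat -> (k < d)%nat -> Un_cv (fun t => X (phi t) j k) (L j k))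
    by (intros j k Hj Hk; apply (HL (j, k)), Hcs; auto).
  exists phi, L. split; [auto| split; auto].
  intros j Hj k Hk.
  apply (Rle_cv_lim (Un := fun _ => 0) (Vn := fun t => peval (g k) (X (phi t) j))).
  - intros t. apply HX; auto.
  - apply cv_const.
  - apply (peval_cv d (g k) (fun t => X (phi t) j)); auto.
Qed.

Lemma loc_obj_attains_min d n p m r s a lam g :
  (1 <= s <= r)%nat -> (1 <= p)%nat -> (forall i, (i < n)%nat -> 0 <= lam i) ->
  (forall k, (k < m)%nat -> poly_in d (g k)) ->
  (exists x0 : nat -> R, inK m g x0) ->
  (exists B : R, forall y, inK m g y -> sumR d (fun k => y k ^ 2) <= B) ->
  exists xs, loc_feasible p m g xs /\
    forall x, loc_feasible p m g x -> loc_obj d n p r s a lam xs <= loc_obj d n p r s a lam x.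
Proof.
  intros hrs hp hlam hg [x0 Hx0] [B HB].
  set (F := loc_obj d n p r s a lam).
  destruct (inf_approx (loc_feasible p m g) F 0) as [mn [Hlow Happ]].
  { exists (fun _ => x0). intros j _; auto. }
  { intros x _. apply loc_obj_nonneg; auto. }
  destruct (choice _ Happ) as [X HX].
  destruct (loc_feasible_cluster d p m g B X hg HB (fun t => proj1 (HX t)))
    as [phi [L [Hphi [HL Hcv]]]].
  exists L. split; auto.
  assert (HFL : F L <= mn).
  { apply (Rle_cv_lim (Un := fun t => F (X (phi t))) (Vn := fun t => mn + / (INR t + 1))).
    - intros t. destruct (HX (phi t)) as [_ Happt]. left. eapply Rlt_le_trans; [exact Happt|].
      apply Rplus_le_compat_l, Rinv_le_contravar; [pose proof (pos_INR t); lra|].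
      apply Rplus_le_compat_r, le_INR, strictly_increasing_ge; auto.
    - apply loc_obj_cv; auto.
    - pose proof (CV_plus _ _ _ _ (cv_const mn) inv_succ_cv0) as Hc.
      rewrite Rplus_0_r in Hc. exact Hc. }
  intros x Hx. pose proof (Hlow x Hx). lra.
Qed.

Theorem theorem4p1
  (d n p m r s : nat) (a : nat -> nat -> R) (lam : nat -> R)
  (g : nat -> mpoly) (UB : nat -> R)
  (hd : (1 <= d)%nat) (hn : (1 <= n)%nat) (hp : (1 <= p)%nat)
  (hlam : forall i, (i < n)%nat -> 0 <= lam i)
  (hrs : (1 <= s <= r)%nat) (hgcd : Nat.gcd r s = 1%nat)
  (hg : forall k, (k < m)%nat -> poly_in d (g k))
  (hKne : exists x0 : nat -> R, inK m g x0)
  (hKbd : exists B : R, forall y, inK m g y -> sumR d (fun k => y k ^ 2) <= B)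
  (harch : archimedean d m g)
  (hUB : forall i, (i < n)%nat ->
     forall y, inK m g y -> tau_norm d r s (fun k => y k - a i k) <= UB i) :
  (* (i) *)
  (forall x, loc_feasible p m g x ->
     exists z u v zeta w t theta,
       mf_feasible d n p r s m g a UB true x z u v zeta w t theta /\
       mf_obj n lam theta = loc_obj d n p r s a lam x) /\
  (* (ii) *)
  (forall x z u v zeta w t theta,
     mf_feasible d n p r s m g a UB true x z u v zeta w t theta ->
     loc_feasible p m g x) /\
  (* (iii) rho_lambda = hat rho_lambda (both minima attained) *)
  (exists rho : R,
     ((exists x, loc_feasible p m g x /\ loc_obj d n p r s a lam x = rho) /\
      (forall x, loc_feasible p m g x -> rho <= loc_obj d n p r s a lam x)) /\
     ((exists x z u v zeta w t theta,
         mf_feasible d n p r s m g a UB true x z u v zeta w t theta /\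
         mf_obj n lam theta = rho) /\
      (forall x z u v zeta w t theta,
         mf_feasible d n p r s m g a UB true x z u v zeta w t theta ->
         rho <= mf_obj n lam theta))) /\
  (* (iv) *)
  (slater_K m g ->
     exists x z u v zeta w t theta,
       mf_feasible d n p r s m g a UB false x z u v zeta w t theta /\
       mf_relaxed_strict d n p r s m g a UB x z u v zeta w t theta).
Proof.
  assert (Hlift := fun x => mf_lift d n p r s m g a UB lam x hrs hp hUB).
  assert (Hproj : forall x z u v zeta w t theta,
             mf_feasible d n p r s m g a UB true x z u v zeta w t theta -> loc_feasible p m g x)
    by (intros * F; exact (proj1 F)).
  split; [exact Hlift|]. split; [exact Hproj|]. split.
  - (* the optimal value is that of a minimiser xs of (LOCOMF), and its lift *)
    destruct (loc_obj_attains_min d n p m r s a lam g hrs hp hlam hg hKne hKbd) as [xs [Hxs Hmin]].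
    exists (loc_obj d n p r s a lam xs). split; [split; eauto|]. split.
    + destruct (Hlift xs Hxs) as (z & u & v & zeta & w & t & theta & Hf & Hobj).
      exists xs, z, u, v, zeta, w, t, theta. auto.
    + intros x z u v zeta w t theta F. eapply Rle_trans; [apply Hmin; eapply Hproj; eauto|].
      eapply loc_obj_le_mf_obj; eauto.
  - (* UB_i >= 0 since UB_i bounds a norm over the nonempty set K *)
    intros HS. apply mf_relaxed_slater; auto. intros i Hi. destruct hKne as [x0 Hx0].
    eapply Rle_trans; [apply (tau_norm_nonneg d r s (fun k => x0 k - a i k))| apply hUB; auto].
Qed.
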